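(* Let $a,x,y$ be integers. (i) For $\beta=[1,3]^{3a}\sigma_1^x\sigma_2^y$, $$V^*_{\widehat\beta}=\epsilon_{x+y}(1+t^2)+t^{3a}\,\frac{t^{x+y+2}+\epsilon_x G t^{y+1}+\epsilon_y G t^{x+1}+\epsilon_{x+y}t^2}{(1+t)^2} =\epsilon_{x+y}(1+t^2)+t^{3a+2}\{\epsilon_{x+y+1}+\epsilon_y A_{x-1}+\epsilon_x A_{y-1}+t^2A_{x-1}A_{y-1}\}.$$ (ii) For $\beta=[1,3]^{3a+1}\sigma_1^x\sigma_2^y$, one has $\beta$ conjugate to $[1,3]^{3a}\sigma_1^{x+y+1}\sigma_2$, and $$V^*_{\widehat\beta}=\epsilon_{x+y}(1+t^2)-t^{3a+3}\,\frac{t^{x+y-1}+\epsilon_{x+y}}{1+t}=\epsilon_{x+y}(1+t^2)-t^{3a+3}A_{x+y-1}.$$ (iii) For $\beta=[1,3]^{3a+2}\sigma_1^x\sigma_2^y$, one has $\beta$ conjugate to $[1,3]^{3a+3}\sigma_1^{x-1}\sigma_2^{y-1}$, and $$V^*_{\widehat\beta}=\epsilon_{x+y}(1+t^2)+t^{3a+3}\,\frac{t^{x+y}+\epsilon_{x-1}Gt^{y}+\epsilon_{y-1}Gt^{x}+\epsilon_{x+y}t^2}{(1+t)^2}.$$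
   Context: $B_3$ is the 3-strand braid group with generators $\sigma_1,\sigma_2$; $\widehat\beta$ is the closure; $[1,3]=\sigma_1\sigma_2$; $w(\beta)$ is the exponent sum of $\beta$. $V_L(t)$ is the Jones polynomial (unknot $=1$, $t^{-1}V_{L_+}-tV_{L_-}=(t^{1/2}-t^{-1/2})V_{L_0}$, $\sigma_i$ a positive crossing). For $\beta\in B_3$, $V^*_{\widehat\beta}$ is defined by $V_{\widehat\beta}(t)=t^{(w(\beta)-2)/2}V^*_{\widehat\beta}(t)$. Notation: $\epsilon_x=(-1)^x$, $G=1+t+t^2$, and for any integer $w$, $A_w=A_w(t)=(t^w+\epsilon_{w-1})/(t+1)$ (a Laurent polynomial; for $w>0$, $A_w=\sum_{j=0}^{w-1}\epsilon_j t^{w-1-j}$, and $A_0=0$). *)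

From mathcomp Require Import all_boot all_order all_algebra.
Set Implicit Arguments. Unset Strict Implicit. Unset Printing Implicit Defensive.
Import Order.TTheory GRing.Theory Num.Theory.
Local Open Scope ring_scope.

Inductive gen3 := s1 | s2.

(* a letter is a generator with a sign: (g, true) = sigma_g, (g, false) = sigma_g^-1 *)
Definition letter := (gen3 * bool)%type.
Definition word := seq letter.

Definition winv (w : word) : word := [seq (l.1, ~~ l.2) | l <- rev w].

(* equality in B_3 = < s1, s2 | s1 s2 s1 = s2 s1 s2 > : the congruence on words
   generated by free cancellation and the braid relation *)
Inductive beq : word -> word -> Prop :=
| beq_refl w : beq w w
| beq_sym u v : beq u v -> beq v u
| beq_trans u v w : beq u v -> beq v w -> beq u w
| beq_ctx p q u v : beq u v -> beq (p ++ u ++ q) (p ++ v ++ q)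
| beq_cancel g b : beq [:: (g, b); (g, ~~ b)] [::]
| beq_braid : beq [:: (s1, true); (s2, true); (s1, true)]
                  [:: (s2, true); (s1, true); (s2, true)].

Definition bconj (u v : word) : Prop := exists g : word, beq (g ++ u ++ winv g) v.

Definition wpow (w : word) (n : int) : word :=
  match n with
  | Posz k => flatten (nseq k w)
  | Negz k => flatten (nseq k.+1 (winv w))
  end.
Definition gpow (g : gen3) (n : int) : word := wpow [:: (g, true)] n.

Definition delta13 : word := [:: (s1, true); (s2, true)].

Definition beta (k x y : int) : word := wpow delta13 k ++ gpow s1 x ++ gpow s2 y.

Definition writhe (w : word) : int := \sum_(l <- w) (if l.2 then 1 else -1).

(** * Kauffman bracket of the closure (state sum), via Temperley-Lieb diagrams
      on 3 strands: 1, e1, e2, e1e2, e2e1 *)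
Inductive tl3 := T1 | Te1 | Te2 | Te12 | Te21.

(* right multiplication of a diagram by e_g: (number of closed loops created, result) *)
Definition tl_mul (D : tl3) (g : gen3) : nat * tl3 :=
  match g, D with
  | s1, T1 => (0, Te1)   | s1, Te1 => (1, Te1)  | s1, Te2 => (0, Te21)
  | s1, Te12 => (0, Te1) | s1, Te21 => (1, Te21)
  | s2, T1 => (0, Te2)   | s2, Te1 => (0, Te12) | s2, Te2 => (1, Te2)
  | s2, Te12 => (1, Te12) | s2, Te21 => (0, Te2)
  end%N.

Definition tl_closure_loops (D : tl3) : nat :=
  match D with T1 => 3 | Te1 => 2 | Te2 => 2 | Te12 => 1 | Te21 => 1 end%N.

(* all states (choices of smoothing, true = A-smoothing) of n crossings *)
Fixpoint all_states (n : nat) : seq (seq bool) :=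
  match n with
  | 0 => [:: [::]]
  | n.+1 => [seq b :: s | b <- [:: true; false], s <- all_states n]
  end.

(* A-smoothing of a positive crossing sigma_g is the identity, its B-smoothing is e_g;
   for a negative crossing it is the opposite. *)
Fixpoint resolve (w : word) (s : seq bool) (acc : nat * tl3) : nat * tl3 :=
  match w, s with
  | l :: w', c :: s' =>
      let acc' := if c != l.2 then
                    let p := tl_mul acc.2 l.1 in (acc.1 + p.1, p.2)%N
                  else acc in
      resolve w' s' acc'
  | _, _ => acc
  end.

Definition state_loops (w : word) (s : seq bool) : nat :=
  let p := resolve w s (0%N, T1) in (p.1 + tl_closure_loops p.2)%N.

Definition state_exp (s : seq bool) : int := \sum_(c <- s) (if c then 1 else -1).

(* Kauffman bracket <closure of w>, normalized with <O> = 1, d = -A^2 - A^-2 *)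
Definition bracket (R : unitRingType) (A : R) (w : word) : R :=
  \sum_(s <- all_states (size w))
     A ^ state_exp s * (- A ^+ 2 - A ^- 2) ^+ (state_loops w s).-1.

(* Jones polynomial of the closure, written in the variable A with t = A^-4
   (so t^(1/2) = A^-2):  V = (-A^3)^(-w) <D>. *)
Definition jonesA (R : unitRingType) (A : R) (w : word) : R :=
  (- A ^+ 3) ^ (- writhe w) * bracket A w.

(* V*: V = t^((w-2)/2) V*, i.e. V* = (t^(1/2))^(-(w-2)) V = A^(2(w-2)) V *)
Definition Vstar (R : unitRingType) (A : R) (w : word) : R :=
  A ^ (2 * (writhe w - 2)) * jonesA A w.

Definition eps (R : unitRingType) (x : int) : R := (-1) ^ x.
Definition Gt (R : ringType) (t : R) : R := 1 + t + t ^+ 2.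
Definition Aw (R : fieldType) (t : R) (w : int) : R := (t ^ w + eps R (w - 1)) / (t + 1).

(* The Kauffman bracket of a closed 3-braid is the Markov trace of the braid's image in
   the Temperley-Lieb algebra TL_3, with basis 1, e1, e2, e1 e2, e2 e1, where sigma_g
   acts as A + A^-1 e_g.  The full twist [1,3]^3 is central in B_3; in TL_3 it scales the
   coefficient c of 1 by A^6 and the reduced trace tr - (A^4 + A^-4) c by A^-6.  As c is
   A^writhe, for every braid w we get
     V*(w [1,3]^(3a)) - e (1 + t^2) = t^(3a) (V*(w) - e (1 + t^2)),  e = (-1)^writhe.
   Since e_g^2 = (-A^2 - A^-2) e_g, sigma_g^x acts by A^x on the kernel of e_g and by
   (-A^-3)^x on its image, which gives V* of sigma_1^x sigma_2^y in closed form: this is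
   (i).  The conjugations in (ii) and (iii) follow from [1,3] sigma_1 = sigma_2 [1,3] and
   the centrality of the full twist; as the trace is cyclic, V* is a conjugacy invariant,
   and (ii), (iii) reduce to (i). *)

From mathcomp Require Import all_boot all_order all_algebra.
From mathcomp Require Import ring.
From Stdlib Require Import Setoid Morphisms.
Import Order.TTheory GRing.Theory Num.Theory.
Local Open Scope ring_scope.
Set Implicit Arguments. Unset Strict Implicit.

(** * The braid group B_3 *)

#[local] Hint Resolve beq_refl : core.

#[local] Instance beq_Equivalence : Equivalence beq.
Proof. split; [exact: beq_refl | exact: beq_sym | exact: beq_trans]. Qed.

Lemma beq_cat u u' v v' : beq u u' -> beq v v' -> beq (u ++ v) (u' ++ v').
Proof.
move=> hu hv; transitivity (u' ++ v).
  by have := beq_ctx [::] v hu.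
by have := beq_ctx u' [::] hv; rewrite !cats0.
Qed.

#[local] Instance cat_Proper : Proper (beq ==> beq ==> beq) (@cat letter).
Proof. by move=> u u' hu v v' hv; apply: beq_cat. Qed.

Lemma winv_cat u v : winv (u ++ v) = winv v ++ winv u.
Proof. by rewrite /winv rev_cat map_cat. Qed.

Lemma winvK : involutive winv.
Proof.
move=> w; rewrite /winv -map_rev revK -map_comp.
by elim: w => //= [[g b] w] ->; rewrite negbK.
Qed.

Lemma beq_mulwV w : beq (w ++ winv w) [::].
Proof.
elim: w => [|[g b] w IH] /=; first reflexivity.
rewrite /winv rev_cons map_rcons -/(winv w) -cats1.
rewrite (catA w) -cat1s IH /=; exact: beq_cancel.
Qed.

Lemma beq_mulVw w : beq (winv w ++ w) [::].
Proof. by have := beq_mulwV (winv w); rewrite winvK. Qed.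

Lemma flatten_nseqS (T : Type) n (w : seq T) :
  flatten (nseq n.+1 w) = flatten (nseq n w) ++ w.
Proof.
elim: n => [|n IH]; first by rewrite /= cats0.
change (w ++ flatten (nseq n.+1 w) = flatten (nseq n.+1 w) ++ w).
by rewrite {1}IH /= catA.
Qed.

Lemma wpowSz w n : beq (wpow w (n + 1)) (wpow w n ++ w).
Proof.
case: n => [n|[|n]].
- by rewrite -PoszD addn1 /wpow flatten_nseqS.
- by rewrite /= cats0 beq_mulVw.
- have -> : Negz n.+1 + 1 = Negz n by rewrite !NegzE; ring.
  by rewrite /wpow [flatten (nseq n.+2 _)]flatten_nseqS -catA beq_mulVw cats0.
Qed.

Lemma wpowD w m n : beq (wpow w (m + n)) (wpow w m ++ wpow w n).
Proof.
have wpowBz k : beq (wpow w (k - 1)) (wpow w k ++ winv w).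
  by rewrite -{2}(subrK 1 k) wpowSz -catA beq_mulwV cats0.
case: n => n; elim: n => [|n IH].
- by rewrite addr0 /= cats0.
- by rewrite -addn1 PoszD addrA !wpowSz IH catA.
- by rewrite (_ : Negz 0 = -1) // wpowBz /= cats0.
- rewrite (_ : Negz n.+1 = Negz n - 1); last by rewrite !NegzE; ring.
  by rewrite addrA !wpowBz IH catA.
Qed.

Lemma wpowN1 w : wpow w (-1) = winv w.
Proof. by rewrite /= cats0. Qed.

Lemma wpow_mul3 w a : wpow w (3 * a) = wpow (w ++ w ++ w) a.
Proof.
have flatten_nseq3 n (s : word) :
    flatten (nseq (3 * n) s) = flatten (nseq n (s ++ s ++ s)).
  by elim: n => [|n IH] //; rewrite mulnS /= IH !catA.
case: a => n; first by rewrite -PoszM /wpow flatten_nseq3.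
have -> : 3 * Negz n = Negz (3 * n.+1).-1 by rewrite !NegzE mulrN -PoszM.
by rewrite /wpow !winv_cat -catA prednK ?muln_gt0 // flatten_nseq3.
Qed.

Definition bsemiconj (c u v : word) : Prop := beq (c ++ u) (v ++ c).
Definition bcentral (c : word) : Prop := forall w, bsemiconj c w w.

#[local] Instance bsemiconj_Proper : Proper (beq ==> beq ==> beq ==> iff) bsemiconj.
Proof. by move=> c c' hc u u' hu v v' hv; rewrite /bsemiconj hc hu hv. Qed.

#[local] Instance bcentral_Proper : Proper (beq ==> iff) bcentral.
Proof. by move=> c c' hc; split=> h w; [rewrite -hc | rewrite hc]. Qed.

Lemma bsemiconj_cat c u v u' v' :
  bsemiconj c u v -> bsemiconj c u' v' -> bsemiconj c (u ++ u') (v ++ v').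
Proof. by rewrite /bsemiconj => h h'; rewrite catA h -catA h' catA. Qed.

Lemma bsemiconj_winv c u v : bsemiconj c u v -> bsemiconj c (winv u) (winv v).
Proof.
rewrite /bsemiconj => h.
transitivity ((winv v ++ v) ++ c ++ winv u); first by rewrite beq_mulVw.
by rewrite -catA (catA v) -h -!catA beq_mulwV cats0.
Qed.

Lemma bsemiconj_flatten c u v n :
  bsemiconj c u v -> bsemiconj c (flatten (nseq n u)) (flatten (nseq n v)).
Proof.
move=> h; elim: n => [|n IH] /=; last exact: bsemiconj_cat.
by rewrite /bsemiconj cats0.
Qed.

Lemma bsemiconj_wpow c u v n : bsemiconj c u v -> bsemiconj c (wpow u n) (wpow v n).
Proof. by case: n => n h; apply: bsemiconj_flatten => //; apply: bsemiconj_winv. Qed.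

Lemma bsemiconj_comp c c' u v w :
  bsemiconj c u v -> bsemiconj c' v w -> bsemiconj (c' ++ c) u w.
Proof. by rewrite /bsemiconj => h h'; rewrite -catA h catA h' catA. Qed.

Lemma bcentral_gens c :
  (forall g, bsemiconj c [:: (g, true)] [:: (g, true)]) -> bcentral c.
Proof.
move=> hg; elim=> [|[g b] w IH]; first by rewrite /bsemiconj cats0.
rewrite -cat1s; apply: bsemiconj_cat => //.
by case: b; [apply: hg | apply: (bsemiconj_winv (hg g))].
Qed.

Lemma bcentral_winv c : bcentral c -> bcentral (winv c).
Proof.
move=> h w; rewrite /bsemiconj.
transitivity (winv c ++ (w ++ c) ++ winv c); first by rewrite -!catA beq_mulwV cats0.
by rewrite -h !catA beq_mulVw.
Qed.

Lemma bcentral_wpow c n : bcentral c -> bcentral (wpow c n).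
Proof.
move=> h; have hflat m c' : bcentral c' -> bcentral (flatten (nseq m c')).
  move=> h' w; elim: m => [|m IH] /=; first by rewrite /bsemiconj cats0.
  exact: bsemiconj_comp IH (h' w).
by case: n => n; apply: hflat => //; apply: bcentral_winv.
Qed.

Definition sigma (g : gen3) : word := [:: (g, true)].
Definition halftwist : word := [:: (s1, true); (s2, true); (s1, true)].

Lemma bsemiconj_delta13 : bsemiconj delta13 (sigma s1) (sigma s2).
Proof. exact: beq_braid. Qed.

Lemma beq_braid_halftwist : beq [:: (s2, true); (s1, true); (s2, true)] halftwist.
Proof. by symmetry; apply: beq_braid. Qed.

Lemma bsemiconj_halftwist12 : bsemiconj halftwist (sigma s1) (sigma s2).
Proof.
rewrite /bsemiconj (_ : _ ++ halftwist = [:: (s2, true); (s1, true); (s2, true)] ++ sigma s1) //.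
by rewrite beq_braid_halftwist.
Qed.

Lemma bsemiconj_halftwist21 : bsemiconj halftwist (sigma s2) (sigma s1).
Proof.
rewrite /bsemiconj (_ : halftwist ++ _ = sigma s1 ++ [:: (s2, true); (s1, true); (s2, true)]) //.
by rewrite beq_braid_halftwist.
Qed.

(* [1,3]^3 is the full twist, the square of the half twist. *)
Lemma bcentral_fulltwist a : bcentral (wpow delta13 (3 * a)).
Proof.
rewrite wpow_mul3; apply: bcentral_wpow.
have -> : delta13 ++ delta13 ++ delta13 = halftwist ++ [:: (s2, true); (s1, true); (s2, true)] by [].
rewrite beq_braid_halftwist; apply: bcentral_gens => -[].
- exact: bsemiconj_comp bsemiconj_halftwist12 bsemiconj_halftwist21.
- exact: bsemiconj_comp bsemiconj_halftwist21 bsemiconj_halftwist12.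
Qed.

#[local] Instance bconj_Proper : Proper (beq ==> beq ==> iff) bconj.
Proof.
move=> u u' hu v v' hv; split=> -[g h]; exists g.
  by rewrite -hu -hv.
by rewrite hu hv.
Qed.

Lemma bconj_refl u : bconj u u.
Proof. by exists [::]; rewrite cats0. Qed.
#[local] Hint Resolve bconj_refl : core.

Lemma bconj_trans u v w : bconj u v -> bconj v w -> bconj u w.
Proof.
move=> [g h] [g' h']; exists (g' ++ g).
rewrite (_ : _ ++ _ = g' ++ (g ++ u ++ winv g) ++ winv g'); last by rewrite winv_cat !catA.
by rewrite h.
Qed.

Lemma bconj_semiconj g u v : bsemiconj g u v -> bconj u v.
Proof. by rewrite /bsemiconj => h; exists g; rewrite catA h -catA beq_mulwV cats0. Qed.

Lemma bconj_rot u v : bconj (u ++ v) (v ++ u).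
Proof. by apply: (bconj_semiconj (g := v)); rewrite /bsemiconj catA. Qed.

Lemma bconj_rot_central c u v : bcentral c -> bconj (c ++ u ++ v) (c ++ v ++ u).
Proof.
move=> hc; apply: (bconj_semiconj (g := v)).
by rewrite /bsemiconj catA -(hc v) -!catA.
Qed.

Lemma wpow1 w : wpow w 1 = w.
Proof. by rewrite /= cats0. Qed.

Lemma bsemiconj_central c w : bcentral c -> bsemiconj w c c.
Proof. by move=> hc; rewrite /bsemiconj (hc w). Qed.

Lemma bconj_beta_3a1 a x y : bconj (beta (3 * a + 1) x y) (beta (3 * a) (x + y + 1) 1).
Proof.
have hC := bcentral_fulltwist a; set C := wpow delta13 (3 * a) in hC *.
have e1 : beq (beta (3 * a + 1) x y) (C ++ (gpow s2 x ++ sigma s1) ++ gpow s2 (1 + y)).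
  rewrite /beta wpowD wpow1 -/C -catA (catA delta13).
  by rewrite (bsemiconj_wpow x bsemiconj_delta13) -!catA /gpow wpowD wpow1.
rewrite e1; apply: bconj_trans (bconj_rot_central _ _ hC) _.
rewrite /beta -/C !catA -(catA C) -wpowD (_ : 1 + y + x = x + y + 1) ?wpow1; last by ring.
apply: (bconj_semiconj (g := halftwist)); rewrite -!catA.
apply: bsemiconj_cat; first exact: bsemiconj_central.
apply: bsemiconj_cat; last exact: bsemiconj_halftwist12.
exact: bsemiconj_wpow bsemiconj_halftwist21.
Qed.

Lemma bconj_beta_3a2 a x y :
  bconj (beta (3 * a + 2) x y) (beta (3 * a + 3) (x - 1) (y - 1)).
Proof.
have hC := bcentral_fulltwist (a + 1); set C := wpow delta13 (3 * (a + 1)) in hC *.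
have e1 : beq (beta (3 * a + 2) x y)
              ([:: (s2, false)] ++ C ++ gpow s1 (x - 1) ++ gpow s2 y).
  rewrite /beta (_ : 3 * a + 2 = 3 * (a + 1) + -1); last by ring.
  rewrite wpowD -/C wpowN1 (_ : winv delta13 = [:: (s2, false)] ++ [:: (s1, false)]) //.
  rewrite -!catA (catA C) (hC [:: (s2, false)]) -!catA (catA [:: (s1, false)]) /gpow.
  by rewrite (addrC x) wpowD wpowN1.
rewrite e1; apply: bconj_trans (bconj_rot _ _) _.
rewrite /beta (_ : 3 * a + 3 = 3 * (a + 1)) -/C; last by ring.
by rewrite -!catA /gpow [wpow _ (y - 1)]wpowD wpowN1.
Qed.

Lemma writhe_cat u v : writhe (u ++ v) = writhe u + writhe v.
Proof. by rewrite /writhe big_cat. Qed.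

Lemma writhe_winv w : writhe (winv w) = - writhe w.
Proof.
rewrite /writhe /winv big_map big_rev -sumrN; apply: eq_bigr => l _.
by case: (l.2).
Qed.

Lemma writhe_wpow w n : writhe (wpow w n) = n * writhe w.
Proof.
have writhe_flatten m u : writhe (flatten (nseq m u)) = m%:Z * writhe u.
  elim: m => [|m IH]; first by rewrite /writhe big_nil mul0r.
  by rewrite /= writhe_cat IH -addn1 PoszD mulrDl mul1r addrC.
by case: n => n; rewrite /wpow writhe_flatten // writhe_winv NegzE mulrN mulNr.
Qed.

Lemma writhe_beta k x y : writhe (beta k x y) = 2 * k + x + y.
Proof.
by rewrite /beta /gpow !writhe_cat !writhe_wpow /writhe !big_cons !big_nil /=; ring.
Qed.

Lemma writhe_beq u v : beq u v -> writhe u = writhe v.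
Proof.
elim=> {u v} [w | u v _ IH | u v w _ IH _ IH' | p q u v _ IH | g b |].
- by [].
- by rewrite IH.
- by rewrite IH IH'.
- by rewrite !writhe_cat IH.
- by rewrite /writhe !big_cons big_nil; case: b => /=; rewrite addr0 ?subrr ?addNr.
- by rewrite /writhe !big_cons big_nil.
Qed.

(** * Integer powers and the coefficients in t *)

Section IntegerPowers.
Variable R : unitRingType.

Lemma exprzMnl (x : R) (k : nat) (n : int) : x ^ (k%:R * n) = (x ^ n) ^+ k.
Proof. by rewrite natz mulrC -exprz_exp. Qed.

Lemma exprz_natC (x : R) (k : nat) (n : int) : (x ^+ k) ^ n = (x ^ n) ^+ k.
Proof. by rewrite (exprz_exp x k) mulrC -exprz_exp. Qed.

Lemma exprz_invnC (x : R) (k : nat) (n : int) : (x ^- k) ^ n = ((x ^ n) ^+ k)^-1.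
Proof. by rewrite exprz_inv -invr_expz exprz_natC. Qed.

Lemma sqr_signz (n : int) : ((-1 : R) ^ n) ^+ 2 = 1.
Proof. by rewrite -exprz_natC sqrrN expr1n exp1rz. Qed.

Lemma exprz_natr (x : R) (k : nat) : x ^ (k%:R : int) = x ^+ k.
Proof. by rewrite natz. Qed.

Lemma signzP (n : int) : (-1 : R) ^ n = 1 \/ (-1 : R) ^ n = -1.
Proof.
have signP k : (-1 : R) ^+ k = 1 \/ (-1 : R) ^+ k = -1.
  by rewrite -signr_odd; case: (odd k); [right | left].
case: n => n; first exact: signP.
change (((-1 : R) ^+ n.+1)^-1 = 1 \/ ((-1 : R) ^+ n.+1)^-1 = -1).
by case: (signP n.+1) => ->; rewrite ?invr1 ?invrN1; [left | right].
Qed.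

End IntegerPowers.

Lemma oppr1_neq0 (R : nzRingType) : (-1 : R) != 0.
Proof. by rewrite oppr_eq0 oner_eq0. Qed.

Lemma eps_add2 (R : fieldType) (n k : int) : eps R (n + 2 * k) = eps R n.
Proof. by rewrite /eps expfzDr ?oppr1_neq0 // exprzMnl sqr_signz mulr1. Qed.

(* The coefficient of t^(3a) in (i). *)
Definition jones_tail (R : fieldType) (t : R) (x y : int) : R :=
  (t ^ (x + y + 2) + eps R x * Gt t * t ^ (y + 1) + eps R y * Gt t * t ^ (x + 1)
   + eps R (x + y) * t ^+ 2) / (1 + t) ^+ 2.

Section JonesTail.
Variables (R : fieldType) (t : R).
Hypotheses (t_neq0 : t != 0) (t1_neq0 : 1 + t != 0).

Lemma Aw_pred n : Aw t (n - 1) = (t ^ (n - 1) + eps R n) / (1 + t).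
Proof.
rewrite /Aw (_ : n - 1 - 1 = n + 2 * -1); last by ring.
by rewrite eps_add2 (addrC t).
Qed.

Lemma jones_tail_pred x y :
  jones_tail t (x - 1) (y - 1) =
  (t ^ (x + y) + eps R (x - 1) * Gt t * t ^ y + eps R (y - 1) * Gt t * t ^ x
   + eps R (x + y) * t ^+ 2) / (1 + t) ^+ 2.
Proof.
rewrite /jones_tail !subrK (_ : x - 1 + (y - 1) + 2 = x + y); last by ring.
by rewrite (_ : x - 1 + (y - 1) = x + y + 2 * -1) ?eps_add2; last by ring.
Qed.

Lemma jones_tail_Aw x y :
  jones_tail t x y = t ^+ 2 * (eps R (x + y + 1) + eps R y * Aw t (x - 1)
                               + eps R x * Aw t (y - 1) + t ^+ 2 * Aw t (x - 1) * Aw t (y - 1)).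
Proof.
rewrite /jones_tail /Aw /Gt /eps !expfzDr ?oppr1_neq0 // !expr1z !exprN1 invrN1.
by case: (signzP R x) => ->; case: (signzP R y) => ->; field; rewrite t_neq0 addrC t1_neq0.
Qed.

Lemma jones_tail_y1 n :
  jones_tail t (n + 1) 1 = - t ^+ 3 * ((t ^ (n - 1) + eps R n) / (1 + t)).
Proof.
rewrite /jones_tail /Gt /eps !expfzDr ?oppr1_neq0 // !expr1z !exprN1.
by case: (signzP R n) => ->; field; rewrite t_neq0 t1_neq0.
Qed.

End JonesTail.

(** * The Temperley-Lieb representation and the Kauffman bracket *)

Lemma state_exp_cons b s : state_exp (b :: s) = (if b then 1 else -1) + state_exp s.
Proof. by rewrite /state_exp big_cons. Qed.

(* Coordinates in the basis 1, e1, e2, e1 e2, e2 e1 of TL_3. *)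
Record tlvec (R : Type) := TLVec { tl1 : R; tle1 : R; tle2 : R; tle12 : R; tle21 : R }.

Section TemperleyLieb.
Variables (R : fieldType) (A : R).
Hypothesis A_neq0 : A != 0.

Definition tl_loop : R := - A ^+ 2 - A ^- 2.

Definition tl_add (u v : tlvec R) : tlvec R :=
  TLVec (tl1 u + tl1 v) (tle1 u + tle1 v) (tle2 u + tle2 v) (tle12 u + tle12 v)
        (tle21 u + tle21 v).

Definition tl_scale (c : R) (u : tlvec R) : tlvec R :=
  TLVec (c * tl1 u) (c * tle1 u) (c * tle2 u) (c * tle12 u) (c * tle21 u).

Definition tl_basis (D : tl3) : tlvec R :=
  match D with
  | T1 => TLVec 1 0 0 0 0 | Te1 => TLVec 0 1 0 0 0 | Te2 => TLVec 0 0 1 0 0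
  | Te12 => TLVec 0 0 0 1 0 | Te21 => TLVec 0 0 0 0 1
  end.

(* Right multiplication by e_g ([tl_lmule] below is left multiplication). *)
Definition tl_mule (g : gen3) (v : tlvec R) : tlvec R :=
  match g with
  | s1 => TLVec 0 (tl1 v + tl_loop * tle1 v + tle12 v) 0 0 (tle2 v + tl_loop * tle21 v)
  | s2 => TLVec 0 0 (tl1 v + tl_loop * tle2 v + tle21 v) (tle1 v + tl_loop * tle12 v) 0
  end.

(* Kauffman's skein relation sigma_g = A + A^-1 e_g. *)
Definition tl_act (l : letter) (v : tlvec R) : tlvec R :=
  if l.2 then tl_add (tl_scale A v) (tl_scale A^-1 (tl_mule l.1 v))
  else tl_add (tl_scale A^-1 v) (tl_scale A (tl_mule l.1 v)).

Definition tl_word (w : word) (v : tlvec R) : tlvec R := foldl (fun v l => tl_act l v) v w.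

Definition tl_trace (v : tlvec R) : R :=
  tl1 v * tl_loop ^+ 2 + (tle1 v + tle2 v) * tl_loop + tle12 v + tle21 v.

Definition tl_lmule (g : gen3) (v : tlvec R) : tlvec R :=
  match g with
  | s1 => TLVec 0 (tl1 v + tl_loop * tle1 v + tle21 v) 0 (tle2 v + tl_loop * tle12 v) 0
  | s2 => TLVec 0 0 (tl1 v + tl_loop * tle2 v + tle12 v) 0 (tle1 v + tl_loop * tle21 v)
  end.

Definition tl_lact (l : letter) (v : tlvec R) : tlvec R :=
  if l.2 then tl_add (tl_scale A v) (tl_scale A^-1 (tl_lmule l.1 v))
  else tl_add (tl_scale A^-1 v) (tl_scale A (tl_lmule l.1 v)).

Definition tl_lword (w : word) (v : tlvec R) : tlvec R := foldr tl_lact v w.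

(* [simpl] is very slow on these terms, so the representation is unfolded explicitly. *)
Ltac tl_unfold :=
  cbv beta iota zeta delta [tl_word foldl tl_act tl_mule tl_add tl_scale tl_basis tl_mul
                            tl_lword foldr tl_lact tl_lmule
                            tl1 tle1 tle2 tle12 tle21 fst snd negb].

Lemma tl_actD l u v : tl_act l (tl_add u v) = tl_add (tl_act l u) (tl_act l v).
Proof.
case: l => [[] []]; case: u => ? ? ? ? ?; case: v => ? ? ? ? ?;
  by tl_unfold; congr TLVec; ring.
Qed.

Lemma tl_actZ l c u : tl_act l (tl_scale c u) = tl_scale c (tl_act l u).
Proof.
case: l => [[] []]; case: u => ? ? ? ? ?;
  by tl_unfold; congr TLVec; ring.
Qed.

Lemma tl_wordD w u v : tl_word w (tl_add u v) = tl_add (tl_word w u) (tl_word w v).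
Proof. by elim: w u v => [|l w IH] u v //=; rewrite tl_actD IH. Qed.

Lemma tl_wordZ w c u : tl_word w (tl_scale c u) = tl_scale c (tl_word w u).
Proof. by elim: w u => [|l w IH] u //=; rewrite tl_actZ IH. Qed.

Lemma tl_word_cat u w v : tl_word (u ++ w) v = tl_word w (tl_word u v).
Proof. by rewrite /tl_word foldl_cat. Qed.

Lemma tl_traceD u v : tl_trace (tl_add u v) = tl_trace u + tl_trace v.
Proof. rewrite /tl_trace /=; ring. Qed.

Lemma tl_traceZ c u : tl_trace (tl_scale c u) = c * tl_trace u.
Proof. rewrite /tl_trace /=; ring. Qed.

Lemma tl_mule_basis g D c :
  tl_mule g (tl_scale c (tl_basis D))
  = tl_scale (c * tl_loop ^+ (tl_mul D g).1) (tl_basis (tl_mul D g).2).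
Proof. by case: g; case: D; tl_unfold; congr TLVec; ring. Qed.

Lemma state_sum_tl_word w acc :
  \sum_(s <- all_states (size w)) A ^ state_exp s *
     tl_loop ^+ ((resolve w s acc).1 + tl_closure_loops (resolve w s acc).2).-1
  = tl_trace (tl_word w (tl_scale (tl_loop ^+ acc.1) (tl_basis acc.2))).
Proof.
elim: w acc => [|[g b] w IH] [n D].
  rewrite /= big_seq1 /state_exp big_nil expr0z mul1r.
  by case: D; rewrite /tl_trace /= addnS /= ?addn0 ?exprD; ring.
have expA c s : A ^ state_exp (c :: s) = (if c then A else A^-1) * A ^ state_exp s.
  by rewrite state_exp_cons expfzDr //; case: c.
rewrite /= cats0 big_cat !big_map /=.
under eq_bigr do rewrite expA -mulrA.
under [X in _ + X]eq_bigr do rewrite expA -mulrA.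
rewrite -!big_distrr; case: b => /=;
  rewrite (IH (n, D)) (IH (n + (tl_mul D g).1, (tl_mul D g).2))%N /= /tl_act /=;
  rewrite tl_wordD !tl_wordZ tl_traceD !tl_traceZ tl_mule_basis exprD tl_wordZ tl_traceZ;
  ring.
Qed.

Lemma bracket_tl_word w : bracket A w = tl_trace (tl_word w (tl_basis T1)).
Proof.
have := state_sum_tl_word w (0%N, T1).
have -> : tl_scale (tl_loop ^+ 0) (tl_basis T1) = tl_basis T1 by rewrite /tl_scale /= expr0 !mul1r.
by move=> <-.
Qed.

Lemma tl1_word w v : tl1 (tl_word w v) = A ^ writhe w * tl1 v.
Proof.
elim: w v => [|[g b] w IH] v; first by rewrite /writhe big_nil mul1r.
rewrite -cat1s writhe_cat tl_word_cat IH expfzDr // /writhe big_seq1.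
by case: g; case: b; rewrite /= mulr0 addr0 ?expr1z ?exprN1; ring.
Qed.

Lemma tl_word_beq u v : beq u v -> tl_word u =1 tl_word v.
Proof.
elim=> {u v} [w|u v _ IH|u v w _ IH _ IH'|p q u v _ IH|g b|] x.
- by [].
- by rewrite IH.
- by rewrite IH IH'.
- by rewrite !tl_word_cat IH.
- case: x => ? ? ? ? ?; case: g; case: b;
    tl_unfold; rewrite /tl_loop; congr TLVec; field; exact: A_neq0.
- case: x => ? ? ? ? ?;
    tl_unfold; rewrite /tl_loop; congr TLVec; field; exact: A_neq0.
Qed.

Lemma tl_lact_act l l' v : tl_lact l (tl_act l' v) = tl_act l' (tl_lact l v).
Proof.
case: l => [[] []]; case: l' => [[] []]; case: v => ? ? ? ? ?;
  by tl_unfold; congr TLVec; ring.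
Qed.

Lemma tl_lact_word l u v : tl_lact l (tl_word u v) = tl_word u (tl_lact l v).
Proof. by elim: u v => [|l' u IH] v //=; rewrite IH tl_lact_act. Qed.

Lemma tl_lword_word w u v : tl_lword w (tl_word u v) = tl_word u (tl_lword w v).
Proof. by elim: w => [|l w IH] //=; rewrite IH tl_lact_word. Qed.

Lemma tl_trace_lact l v : tl_trace (tl_lact l v) = tl_trace (tl_act l v).
Proof. by case: l => [[] []]; case: v => ? ? ? ? ?; rewrite /tl_trace; tl_unfold; ring. Qed.

Lemma tl_trace_lword w v : tl_trace (tl_lword w v) = tl_trace (tl_word w v).
Proof.
elim: w v => [|l w IH] v //=.
by rewrite tl_trace_lact -[tl_act l _]/(tl_word [:: l] _) -tl_lword_word IH.
Qed.

Lemma tl_lword_basis w : tl_lword w (tl_basis T1) = tl_word w (tl_basis T1).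
Proof.
elim: w => [|l w IH] //=; rewrite IH tl_lact_word.
by congr tl_word; case: l => [[] []]; tl_unfold; congr TLVec; ring.
Qed.

Lemma tl_lactK g b v : tl_lact (g, ~~ b) (tl_lact (g, b) v) = v.
Proof.
by case: v => ? ? ? ? ?; case: g; case: b; tl_unfold; rewrite /tl_loop; congr TLVec; field.
Qed.

Lemma tl_lword_cat u w v : tl_lword (u ++ w) v = tl_lword u (tl_lword w v).
Proof. by rewrite /tl_lword foldr_cat. Qed.

Lemma tl_lwordK w v : tl_lword (winv w) (tl_lword w v) = v.
Proof.
elim: w v => [|[g b] w IH] v //.
rewrite /winv rev_cons map_rcons -cats1 -/(winv w) tl_lword_cat.
by rewrite [tl_lword [:: _] _]/= tl_lactK IH.
Qed.

(* Cyclicity of the trace, seen through the left action [tl_lact]. *)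
Lemma bracket_bconj u v : bconj u v -> bracket A u = bracket A v.
Proof.
case=> g h; rewrite !bracket_tl_word -(tl_word_beq h) !tl_word_cat -[RHS]tl_trace_lword.
by rewrite tl_lword_word -[X in tl_lword _ X]tl_lword_basis tl_lwordK.
Qed.

Lemma tl_word_wpow_eigen (f : tlvec R -> R) w c a v :
  c != 0 -> (forall u, f (tl_word w u) = c * f u) ->
  f (tl_word (wpow w a) v) = c ^ a * f v.
Proof.
have flatten_eigen u d n : (forall v, f (tl_word u v) = d * f v) ->
    f (tl_word (flatten (nseq n u)) v) = d ^+ n * f v.
  move=> hu; elim: n v => [|n IH] v; first by rewrite mul1r.
  by rewrite [flatten _]/= tl_word_cat IH hu mulrA -exprSr.
move=> c0 hw; case: a => n; first exact: flatten_eigen.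
rewrite /wpow (flatten_eigen _ c^-1) => [|u]; first by rewrite exprVn.
have := hw (tl_word (winv w) u); rewrite -tl_word_cat (tl_word_beq (beq_mulVw w)).
by move=> ->; rewrite mulKf.
Qed.

Definition tl_kappa : R := A ^+ 4 + A ^- 4.

(* The full twist scales [tl1] by [A ^+ 6] and [tl_trace_red] by [A ^- 6]. *)
Definition tl_trace_red (v : tlvec R) : R := tl_trace v - tl_kappa * tl1 v.

Lemma tl_trace_red_fulltwist v :
  tl_trace_red (tl_word (delta13 ++ delta13 ++ delta13) v) = A ^- 6 * tl_trace_red v.
Proof.
case: v => ? ? ? ? ?; rewrite /tl_trace_red /tl_trace /tl_kappa /delta13 /=.
by tl_unfold; rewrite /tl_loop; field.
Qed.

(** * The normalized Jones polynomial *)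

Lemma Vstar_bracket w :
  Vstar A w = (-1) ^ writhe w * (A ^ writhe w)^-1 * A ^- 4 * bracket A w.
Proof.
rewrite /Vstar /jonesA expNrz -exprz_inv invrN1 -invr_expz.
have -> : A ^ (2 * (writhe w - 2)) = (A ^ writhe w)^-1 * A ^- 4 * (A ^+ 3) ^ writhe w.
  rewrite (exprz_exp A 3) invr_expz exprnN -!expfzDr //; congr (A ^ _); ring.
by field; rewrite A_neq0 !expfz_neq0 ?expf_neq0.
Qed.

Lemma Vstar_beq u v : beq u v -> Vstar A u = Vstar A v.
Proof. by move=> h; rewrite !Vstar_bracket !bracket_tl_word (writhe_beq h) (tl_word_beq h). Qed.

Lemma Vstar_bconj u v : bconj u v -> Vstar A u = Vstar A v.
Proof.
move=> huv; have [g h] := huv.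
have hw : writhe u = writhe v.
  by rewrite -(writhe_beq h) !writhe_cat writhe_winv addrCA subrr addr0.
by rewrite !Vstar_bracket hw (bracket_bconj huv).
Qed.

Lemma Vstar_fulltwist w a :
  Vstar A (w ++ wpow delta13 (3 * a))
  = eps R (writhe w) * (1 + (A ^- 4) ^+ 2)
    + (A ^- 4) ^ (3 * a) * (Vstar A w - eps R (writhe w) * (1 + (A ^- 4) ^+ 2)).
Proof.
set u := tl_word w (tl_basis T1).
have tl1u : tl1 u = A ^ writhe w by rewrite tl1_word mulr1.
have trace_split v : tl_trace v = tl_kappa * tl1 v + tl_trace_red v.
  by rewrite /tl_trace_red addrC subrK.
have writhe_twist : writhe (delta13 ++ delta13 ++ delta13) = 6.
  by rewrite /writhe !big_cons big_nil.
have A6 : A ^- 6 != 0 by rewrite invr_eq0 expf_neq0.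
rewrite !Vstar_bracket !bracket_tl_word tl_word_cat !trace_split tl1_word tl1u.
rewrite wpow_mul3 (tl_word_wpow_eigen _ _ A6 tl_trace_red_fulltwist).
rewrite writhe_cat writhe_wpow writhe_twist (mulrC a).
rewrite /eps !expfzDr ?oppr1_neq0 // !exprzMnl exprz_invnC exprz_invnC.
have sign6 : ((-1) ^ a) ^+ 6 = 1 :> R by rewrite (exprM _ 2 3) sqr_signz expr1n.
by rewrite sign6 /tl_kappa; field; rewrite A_neq0 !expfz_neq0.
Qed.

Lemma Vstar_beta_fulltwist a r x y :
  Vstar A (beta (3 * a + r) x y)
  = eps R (x + y) * (1 + (A ^- 4) ^+ 2)
    + (A ^- 4) ^ (3 * a) * (Vstar A (beta r x y) - eps R (x + y) * (1 + (A ^- 4) ^+ 2)).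
Proof.
have hbeq : beq (beta (3 * a + r) x y) (beta r x y ++ wpow delta13 (3 * a)).
  by rewrite /beta addrC wpowD -!catA (bcentral_fulltwist a) -!catA.
have sign2 : (-1) ^ (2 * r + (x + y)) = (-1) ^ (x + y) :> R.
  by rewrite [LHS]expfzDr ?oppr1_neq0 // exprzMnl sqr_signz mul1r.
by rewrite (Vstar_beq hbeq) Vstar_fulltwist writhe_beta /eps -addrA sign2.
Qed.

Hypothesis loop_neq0 : tl_loop != 0.

(* Two normal forms of [tl_loop != 0] that occur as side conditions of [field]. *)
Lemma tl_loop_neq0' : - A ^+ 2 * A ^+ 2 - 1 != 0.
Proof.
have -> : - A ^+ 2 * A ^+ 2 - 1 = tl_loop * A ^+ 2 by rewrite /tl_loop; field.
by rewrite mulf_neq0 // expf_neq0.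
Qed.

Lemma tl_loop_neq0'' : A ^+ 4 + 1 != 0.
Proof.
have -> : A ^+ 4 + 1 = - (tl_loop * A ^+ 2) by rewrite /tl_loop; field.
by rewrite oppr_eq0 mulf_neq0 // expf_neq0.
Qed.

(* Since [e_g ^ 2 = tl_loop * e_g], sigma_g acts by [A] on the kernel of [e_g] and by
   [A + A^-1 * tl_loop = - A ^- 3] on its image. *)
Definition tl_gcoef (x : int) : R := ((- A ^- 3) ^ x - A ^ x) / tl_loop.

Definition tl_gpow (g : gen3) (x : int) (v : tlvec R) : tlvec R :=
  tl_add (tl_scale (A ^ x) v) (tl_scale (tl_gcoef x) (tl_mule g v)).

Lemma tl_act_gpow g b x v :
  tl_act (g, b) (tl_gpow g x v) = tl_gpow g (x + (if b then 1 else -1)) v.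
Proof.
have A3 : - A ^- 3 != 0 by rewrite oppr_eq0 invr_eq0 expf_neq0.
case: v => ? ? ? ? ?; case: g; case: b;
  rewrite /tl_gpow /tl_gcoef !expfzDr // ?expr1z ?exprN1; tl_unfold; rewrite /tl_loop;
  by congr TLVec; field; rewrite A_neq0 tl_loop_neq0' ?oppr1_neq0.
Qed.

Lemma tl_word_gpow g x v : tl_word (gpow g x) v = tl_gpow g x v.
Proof.
have gpow_nseq b m : tl_word (flatten (nseq m [:: (g, b)])) v
                     = tl_gpow g (m%:Z * (if b then 1 else -1)) v.
  elim: m => [|m IH].
    by rewrite mul0r /tl_gpow /tl_gcoef !expr0z subrr mul0r; case: v => ? ? ? ? ?;
      tl_unfold; congr TLVec; ring.
  by rewrite flatten_nseqS tl_word_cat IH [tl_word _ _]/= tl_act_gpow -addn1 PoszD mulrDl mul1r.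
case: x => n; first by rewrite gpow_nseq mulr1.
by rewrite /gpow /wpow gpow_nseq mulrN1 NegzE.
Qed.

Lemma Vstar_beta0 x y :
  Vstar A (beta 0 x y) = eps R (x + y) * (1 + (A ^- 4) ^+ 2) + jones_tail (A ^- 4) x y.
Proof.
rewrite Vstar_bracket bracket_tl_word writhe_beta mulr0 add0r /beta !tl_word_cat.
rewrite [tl_word (wpow _ 0) _]/= !tl_word_gpow.
rewrite /jones_tail /Gt /eps /tl_trace /tl_gpow /tl_gcoef; tl_unfold; rewrite /tl_loop.
have A4 : A ^- 4 != 0 by rewrite invr_eq0 expf_neq0.
rewrite !expfzDr ?oppr1_neq0 // !expr1z !(expNrz (A ^- 3)) !exprz_invnC.
case: (signzP R x) => ->; case: (signzP R y) => ->; field;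
  by rewrite A_neq0 tl_loop_neq0' tl_loop_neq0'' !expfz_neq0.
Qed.

End TemperleyLieb.

Theorem corollary2p17 (R : fieldType) (A : R) (a x y : int) :
  A != 0 -> 1 + A ^- 4 != 0 ->
  [/\
   (* (i) *)
   Vstar A (beta (3 * a) x y) =
     eps R (x + y) * (1 + (A ^- 4) ^+ 2)
     + (A ^- 4) ^ (3 * a) *
       (((A ^- 4) ^ (x + y + 2) + eps R x * Gt (A ^- 4) * (A ^- 4) ^ (y + 1)
         + eps R y * Gt (A ^- 4) * (A ^- 4) ^ (x + 1) + eps R (x + y) * (A ^- 4) ^+ 2)
        / (1 + A ^- 4) ^+ 2)
   /\
   Vstar A (beta (3 * a) x y) =
     eps R (x + y) * (1 + (A ^- 4) ^+ 2)
     + (A ^- 4) ^ (3 * a + 2) *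
       (eps R (x + y + 1) + eps R y * Aw (A ^- 4) (x - 1) + eps R x * Aw (A ^- 4) (y - 1)
        + (A ^- 4) ^+ 2 * Aw (A ^- 4) (x - 1) * Aw (A ^- 4) (y - 1)),
   (* (ii) *)
   bconj (beta (3 * a + 1) x y) (beta (3 * a) (x + y + 1) 1)
   /\ Vstar A (beta (3 * a + 1) x y) =
        eps R (x + y) * (1 + (A ^- 4) ^+ 2)
        - (A ^- 4) ^ (3 * a + 3) *
          (((A ^- 4) ^ (x + y - 1) + eps R (x + y)) / (1 + A ^- 4))
   /\ Vstar A (beta (3 * a + 1) x y) =
        eps R (x + y) * (1 + (A ^- 4) ^+ 2)
        - (A ^- 4) ^ (3 * a + 3) * Aw (A ^- 4) (x + y - 1) &
   (* (iii) *)
   bconj (beta (3 * a + 2) x y) (beta (3 * a + 3) (x - 1) (y - 1))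
   /\ Vstar A (beta (3 * a + 2) x y) =
        eps R (x + y) * (1 + (A ^- 4) ^+ 2)
        + (A ^- 4) ^ (3 * a + 3) *
          (((A ^- 4) ^ (x + y) + eps R (x - 1) * Gt (A ^- 4) * (A ^- 4) ^ y
            + eps R (y - 1) * Gt (A ^- 4) * (A ^- 4) ^ x + eps R (x + y) * (A ^- 4) ^+ 2)
           / (1 + A ^- 4) ^+ 2)].
Proof.
move=> A0 t1; have t0 : A ^- 4 != 0 by rewrite invr_eq0 expf_neq0.
have loop0 : tl_loop A != 0.
  rewrite (_ : tl_loop A = - A ^+ 2 * (1 + A ^- 4)); last by rewrite /tl_loop; field.
  by rewrite mulf_neq0 ?oppr_eq0 ?expf_neq0.
have twist k n m : Vstar A (beta (3 * k) n m)
    = eps R (n + m) * (1 + (A ^- 4) ^+ 2) + (A ^- 4) ^ (3 * k) * jones_tail (A ^- 4) n m.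
  have := Vstar_beta_fulltwist A0 k 0 n m.
  by rewrite addr0 (Vstar_beta0 A0 loop0) [_ + jones_tail _ _ _]addrC addrK.
have tpowD k j : (A ^- 4) ^ (3 * k + j%:R) = (A ^- 4) ^ (3 * k) * (A ^- 4) ^+ j.
  by rewrite expfzDr // exprz_natr.
split.
- split; rewrite twist //.
  by rewrite tpowD -mulrA -(jones_tail_Aw t0 t1).
- have hV : Vstar A (beta (3 * a + 1) x y) = eps R (x + y) * (1 + (A ^- 4) ^+ 2)
      - (A ^- 4) ^ (3 * a + 3) * (((A ^- 4) ^ (x + y - 1) + eps R (x + y)) / (1 + A ^- 4)).
    rewrite (Vstar_bconj A0 (bconj_beta_3a1 a x y)) twist.
    rewrite (_ : x + y + 1 + 1 = x + y + 2 * 1) ?eps_add2; last by ring.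
    by rewrite jones_tail_y1 // tpowD mulNr mulrN !mulrA.
  split; first exact: bconj_beta_3a1.
  by rewrite hV Aw_pred.
- split; first exact: bconj_beta_3a2.
  rewrite (Vstar_bconj A0 (bconj_beta_3a2 a x y)) (_ : 3 * a + 3 = 3 * (a + 1)); last by ring.
  rewrite twist jones_tail_pred (_ : x - 1 + (y - 1) = x + y + 2 * -1) ?eps_add2; last by ring.
  by rewrite (_ : 3 * (a + 1) = 3 * a + 3); last by ring.
Qed.
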